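(* Let $\mathcal{S}$ be the regular $d$-dimensional $\delta$-grid, $1\le q<\infty$, and let $\Omega\subseteq[0,1]^d$ be a convex body containing a ball of radius at least $10d^{3/2}\delta$. Then for every $t>0$ and every $f\in B^q_{\mathcal{S}}(0;t;\Omega)$, $f(x)\ge-20dt$ for all $x\in\Omega$.
   Context: $\mathcal{S}=\{(k_1\delta,\dots,k_d\delta):k_i\in\mathbb{Z}\}$. $\ell_{\mathcal{S}}(f,\Omega,q)=\big(\frac{1}{\#(\Omega\cap\mathcal{S})}\sum_{s\in\Omega\cap\mathcal{S}}|f(s)|^q\big)^{1/q}$ and $B^q_{\mathcal{S}}(0;t;\Omega)=\{f:\Omega\to\mathbb{R}\ \text{convex}:\ \ell_{\mathcal{S}}(f,\Omega,q)\le t\}$. *)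

From HB Require Import structures.
From mathcomp Require Import all_boot all_order all_algebra.
From mathcomp Require Import all_classical all_reals all_analysis.
Unset Printing Implicit Defensive.
Import Order.TTheory GRing.Theory Num.Theory numFieldNormedType.Exports.
Local Open Scope ring_scope.
Local Open Scope classical_set_scope.

Section Defs.
Variable R : realType.
Variable d : nat.

Definition enorm (x : 'rV[R]_d) : R := Num.sqrt (\sum_(i < d) (x ord0 i) ^+ 2).

Definition eball (c : 'rV[R]_d) (r : R) : set 'rV[R]_d :=
  [set y | enorm (y - c) < r].

Definition unit_cube : set 'rV[R]_d := [set x | forall i, 0 <= x ord0 i <= 1].

Definition convex_set (O : set 'rV[R]_d) : Prop :=
  forall x y (l : R), O x -> O y -> 0 <= l <= 1 -> O (l *: x + (1 - l) *: y).

Definition convex_body (O : set 'rV[R]_d) : Prop :=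
  convex_set O /\ compact O /\ (interior O) !=set0.

(* f : Omega -> R convex (values outside Omega are irrelevant) *)
Definition convex_on (O : set 'rV[R]_d) (f : 'rV[R]_d -> R) : Prop :=
  forall x y (l : R), O x -> O y -> 0 <= l <= 1 ->
    f (l *: x + (1 - l) *: y) <= l * f x + (1 - l) * f y.

(* Grid points in [0,1]^d are exactly the points k*delta with
   k_i in {0, ..., truncn (1/delta)}; we index Omega ∩ S by these k. *)
Definition gidx (delta : R) := {ffun 'I_d -> 'I_(Num.truncn (delta^-1)).+1}.

Definition gpt (delta : R) (k : gidx delta) : 'rV[R]_d :=
  \row_i ((k i : nat)%:R * delta).

Definition in_OS (delta : R) (O : set 'rV[R]_d) : pred (gidx delta) :=
  fun k => `[< O (gpt delta k) >].

Definition card_OS (delta : R) (O : set 'rV[R]_d) : nat := #|in_OS delta O|.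

Definition ellS (delta : R) (f : 'rV[R]_d -> R) (O : set 'rV[R]_d) (q : R) : R :=
  ((card_OS delta O)%:R^-1 *
     \sum_(k in in_OS delta O) (`|f (gpt delta k)| `^ q)) `^ (q^-1).

Definition BqS (delta : R) (q t : R) (O : set 'rV[R]_d) : set ('rV[R]_d -> R) :=
  [set f | convex_on O f /\ ellS delta f O q <= t].

End Defs.

From Pilot Require Import Defs.
From HB Require Import structures.
From mathcomp Require Import all_boot all_order all_algebra.
From mathcomp Require Import all_classical all_reals all_analysis.
From mathcomp Require Import ring lra.
Import Order.TTheory GRing.Theory Num.Theory numFieldNormedType.Exports.
Local Open Scope ring_scope.
Local Open Scope classical_set_scope.

(* Fix x in O, put M = -f(x), eps = 1/(2d), s = 1 - eps.  For a grid node g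
   let y = x + s^-1 (g - x).  Convexity on [x, y] gives
   f(g) <= s f(y) + (1 - s) f(x), and Jensen's inequality for the multilinear
   (tent) interpolation of y by grid nodes gives f(y) <= sum_v tau_v(y) f(v);
   hence (1 - s) M <= |f(g)| + s sum_v tau_v(y) |f(v)|  (defect_bound).
   To average this over O ∩ S, every grid point h of O is transported to
   x + s (h + eta (c - h) - x) with eta = 3 eps / 5; these points form a copy
   of O ∩ S shrunk by lam = s (1 - eta) which the ball around c keeps inside
   O, and the box of side lam delta around each is split among nearby nodes
   with "cell-share" weights.  Each node receives total cell-share weight
   at most lam^-d <= 5 and total tent weight at most 1, so exchanging sums
   yields #(O∩S) (1 - s) M <= 5 (1 + s) sum_(O∩S) |f| <= 5 (1 + s) #(O∩S) t
   by the power-mean inequality, i.e. M <= 20 d t. *)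

Section OneDimensionalWeights.
Context {R : realType}.
Implicit Types (u v p b mu l : R).

(* The clamp of v to [0,1]; its increments over unit shifts build the 1-d weights. *)
Definition clamp01 v : R := if v <= 0 then 0 else if v <= 1 then v else 1.

Ltac clamp_cases :=
  repeat match goal with
  | |- context[if ?a <= ?b then _ else _] => case: (lerP a b) => ?
  end.

(* The hat function max(0, 1 - |u|): linear interpolation weight of the node 0 at u. *)
Definition tent u : R := clamp01 (u + 1) - clamp01 u.

Lemma clamp01_ge0 v : 0 <= clamp01 v.
Proof. rewrite /clamp01; clamp_cases; lra. Qed.

Lemma clamp01_le1 v : clamp01 v <= 1.
Proof. rewrite /clamp01; clamp_cases; lra. Qed.

Lemma clamp01_le u v : u <= v -> clamp01 u <= clamp01 v.
Proof. rewrite /clamp01 => uv; clamp_cases; lra. Qed.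

Lemma clamp01_diff u v : clamp01 u - clamp01 v <= 1.
Proof. have := clamp01_le1 u; have := clamp01_ge0 v; lra. Qed.

Lemma clamp01_0 v : v <= 0 -> clamp01 v = 0.
Proof. rewrite /clamp01 => h; clamp_cases; lra. Qed.

Lemma clamp01_1 v : 1 <= v -> clamp01 v = 1.
Proof. rewrite /clamp01 => h; clamp_cases; lra. Qed.

Lemma clamp01_id v : 0 <= v <= 1 -> clamp01 v = v.
Proof. rewrite /clamp01 => /andP[h0 h1]; clamp_cases; lra. Qed.

Lemma sum_clamp01 n u : 0 <= u <= n%:R -> \sum_(j < n) clamp01 (u - j%:R) = u.
Proof.
elim: n u => [|n IH] u /=; first by rewrite big_ord0 => /andP[? ?]; lra.
move=> /andP[h0 h1]; rewrite big_ord_recl /= subr0.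
have [u1|u1] := lerP 1 u.
  rewrite clamp01_1 // -[in RHS](subrK 1 u) addrC; congr (_ + _).
  rewrite -(IH (u - 1)); last by rewrite -natr1 in h1; apply/andP; split; lra.
  by apply: eq_bigr => i _; rewrite /bump /= -natr1; congr clamp01; lra.
rewrite clamp01_id; last by apply/andP; split; lra.
rewrite big1 ?addr0 // => i _; rewrite clamp01_0 //; rewrite /bump /= -natr1.
have : 0 <= (i : nat)%:R :> R by [].
lra.
Qed.

Lemma sum_ord_telescope (F : nat -> R) n : \sum_(k < n) (F k.+1 - F k) = F n - F 0%N.
Proof. by rewrite -(big_mkord xpredT (fun k => F k.+1 - F k)) telescope_sumr. Qed.

Lemma tent_ge0 u : 0 <= tent u.
Proof. by rewrite /tent subr_ge0; apply: clamp01_le; lra. Qed.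

Lemma tent_neq0 u : tent u != 0 -> -1 < u < 1.
Proof.
rewrite /tent => h; apply/andP; split; rewrite ltNge; apply/negP => hu; move: h;
  [rewrite !clamp01_0 ?subrr ?eqxx // | rewrite !clamp01_1 ?subrr ?eqxx //]; lra.
Qed.

Lemma tent_sum1 n u : 0 <= u <= n%:R -> \sum_(k < n.+1) tent (u - k%:R) = 1.
Proof.
move=> /andP[h0 h1]; rewrite /tent sumrB.
rewrite (eq_bigr (fun k : 'I_n.+1 => clamp01 ((u + 1) - k%:R))); last first.
  by move=> k _; congr clamp01; lra.
rewrite !sum_clamp01; first lra.
- by apply/andP; split; rewrite -?natr1; lra.
- by apply/andP; split; rewrite -?natr1; lra.
Qed.

Lemma tent_bary n u : 0 <= u <= n%:R -> \sum_(k < n.+1) tent (u - k%:R) * k%:R = u.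
Proof.
elim: n u => [|n IH] u /=.
  move=> /andP[? ?]; have -> : u = 0 by lra.
  by rewrite big_ord_recl big_ord0 mulr0 addr0.
move=> /andP[h0 h1]; rewrite big_ord_recl /= mulr0 add0r.
have [u1|u1] := lerP 1 u.
  rewrite (eq_bigr (fun k : 'I_n.+1 =>
      tent ((u - 1) - k%:R) * k%:R + tent ((u - 1) - k%:R))); last first.
    move=> i _; rewrite /bump /= -natr1 mulrDr mulr1.
    by congr (tent _ * _ + tent _); lra.
  rewrite big_split /= IH ?tent_sum1; first lra.
  - by rewrite -natr1 in h1; apply/andP; split; lra.
  - by rewrite -natr1 in h1; apply/andP; split; lra.
rewrite big_ord_recl /=.
have bump0 i : bump 0 i = i.+1 by [].
rewrite !bump0 big1 ?addr0; last first.
  move=> i _; rewrite /tent !clamp01_0 ?subrr ?mul0r //; rewrite /bump /= -!natr1;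
  have : 0 <= (i : nat)%:R :> R by []; lra.
rewrite mulr1 /tent (clamp01_0 (u - 1)); last lra.
by rewrite clamp01_id; [lra | apply/andP; split; lra].
Qed.

Lemma tent_le_increment mu u : 1 <= mu ->
  tent u <= clamp01 (u + mu / 2 + 1 / 2) - clamp01 (u - mu / 2 + 1 / 2).
Proof. by move=> hmu; rewrite /tent /clamp01; clamp_cases; lra. Qed.

(* Load bound: hat functions sampled along a progression of step mu >= 1 sum to
   at most 1, since the dominating increments telescope. *)
Lemma tent_load mu b n : 1 <= mu -> \sum_(k < n) tent (b + mu * k%:R) <= 1.
Proof.
move=> hmu.
pose F (k : nat) := clamp01 (b + mu * k%:R - mu / 2 + 1 / 2).
apply: (le_trans (y := \sum_(k < n) (F k.+1 - F k))); last first.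
  by rewrite sum_ord_telescope /F clamp01_diff.
apply: ler_sum => k _; rewrite /F -natr1 mulrDr mulr1.
have -> : b + (mu * k%:R + mu) - mu / 2 + 1 / 2 = b + mu * k%:R + mu / 2 + 1 / 2 by lra.
exact: tent_le_increment.
Qed.

(* The share of the interval of length l centred at p that lies in the unit cell
   [j - 1/2, j + 1/2], normalised by l. *)
Definition cell_share l p (j : nat) : R :=
  (clamp01 (p + l / 2 + 1 / 2 - j%:R) - clamp01 (p - l / 2 + 1 / 2 - j%:R)) / l.

Lemma cell_share_ge0 l p j : 0 < l -> 0 <= cell_share l p j.
Proof.
move=> l0; apply: divr_ge0; last exact: ltW.
by rewrite subr_ge0; apply: clamp01_le; lra.
Qed.

Lemma cell_share_neq0 l p j : 0 < l <= 1 -> cell_share l p j != 0 -> -1 < p - j%:R < 1.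
Proof.
move=> /andP[l0 l1]; rewrite /cell_share => h.
apply/andP; split; rewrite ltNge; apply/negP => hu; move: h;
  [rewrite !clamp01_0 ?subrr ?mul0r ?eqxx // | rewrite !clamp01_1 ?subrr ?mul0r ?eqxx //];
  lra.
Qed.

Lemma cell_share_sum1 l p n : 0 < l -> 0 <= p - l / 2 + 1 / 2 ->
  p + l / 2 + 1 / 2 <= n%:R -> \sum_(j < n) cell_share l p j = 1.
Proof.
move=> l0 h1 h2; rewrite /cell_share -mulr_suml sumrB !sum_clamp01.
- by field; lra.
- by apply/andP; split; lra.
- by apply/andP; split; lra.
Qed.

(* Intervals of length l centred along a progression of step l are disjoint, so a
   fixed cell receives total share at most 1/l. *)
Lemma cell_share_load l a n j : 0 < l -> \sum_(k < n) cell_share l (a + l * k%:R) j <= l^-1.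
Proof.
move=> l0.
pose F (k : nat) := clamp01 (a + l * k%:R - l / 2 + 1 / 2 - j%:R).
have -> : \sum_(k < n) cell_share l (a + l * k%:R) j = \sum_(k < n) (F k.+1 - F k) / l.
  apply: eq_bigr => k _; rewrite /cell_share /F -[k.+1%:R]natr1 mulrDr mulr1.
  by congr ((clamp01 _ - clamp01 _) / _); lra.
rewrite -mulr_suml sum_ord_telescope ler_pdivrMr // mulVf ?gt_eqF //.
exact: clamp01_diff.
Qed.

End OneDimensionalWeights.
Section ConvexityInequalities.
Context {R : realType}.

Lemma jensen_seq {d} {O : set 'rV[R]_d} {f : 'rV[R]_d -> R} {I : eqType} (r : seq I)
  {w : I -> R} {P : I -> 'rV[R]_d} :
  Defs.convex_set R d O -> convex_on R d O f -> (forall i, 0 <= w i) ->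
  \sum_(i <- r) w i = 1 -> (forall i, w i != 0 -> O (P i)) ->
  O (\sum_(i <- r) w i *: P i) /\
  f (\sum_(i <- r) w i *: P i) <= \sum_(i <- r) w i * f (P i).
Proof.
move=> cO cf; elim: r w => [|i r IH] w hw.
  by rewrite big_nil => /esym/eqP; rewrite oner_eq0.
rewrite !big_cons => hs hP.
set B := \sum_(j <- r) w j.
have B0 : 0 <= B by apply: sumr_ge0.
have [Bz|Bnz] := eqVneq B 0.
  have : \sum_(j <- r) w j == 0 by rewrite -/B Bz.
  rewrite psumr_eq0 // => /allP hall.
  have wi1 : w i = 1 by move: hs; rewrite -/B Bz addr0.
  rewrite !big_seq !big1 => [||j /hall /eqP ->]; last by rewrite scale0r.
    - by rewrite wi1 scale1r mul1r !addr0; split => //; apply: hP; rewrite wi1 oner_eq0.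
    - by move=> j /hall /eqP ->; rewrite mul0r.
have Bp : 0 < B by rewrite lt_neqAle eq_sym Bnz B0.
have s1 : \sum_(j <- r) w j / B = 1 by rewrite -mulr_suml -/B mulfV.
have hP' j : w j / B != 0 -> O (P j).
  by move=> h; apply: hP; apply: contraNN h => /eqP ->; rewrite mul0r.
have [Zin Zf] := IH (fun j => w j / B) (fun j => divr_ge0 (hw j) B0) s1 hP'.
set Z := \sum_(j <- r) (w j / B) *: P j in Zin Zf.
have eZ : \sum_(j <- r) w j *: P j = B *: Z.
  rewrite /Z scaler_sumr; apply: eq_bigr => j _; rewrite scalerA.
  by rewrite mulrC divfK.
have eF : \sum_(j <- r) w j * f (P j) = B * \sum_(j <- r) (w j / B) * f (P j).
  rewrite mulr_sumr; apply: eq_bigr => j _; rewrite mulrA.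
  by rewrite [B * _]mulrC divfK.
have hB : B = 1 - w i by rewrite -hs /B; ring.
rewrite eZ eF hB.
have [wi0|win0] := eqVneq (w i) 0.
  rewrite wi0 subr0 scale0r mul0r !add0r scale1r mul1r; split => //.
  by move: Zf; rewrite hB wi0 subr0.
have wi01 : 0 <= w i <= 1 by apply/andP; split; [exact: hw | lra].
split; first exact: cO (hP i win0) Zin wi01.
apply: le_trans (cf _ _ _ (hP i win0) Zin wi01) _.
by rewrite lerD2l ler_wpM2l -?hB //; lra.
Qed.

Lemma young_tangent (q b : R) : 1 <= q -> 0 <= b -> b <= b `^ q / q + (1 - q^-1).
Proof.
move=> q1 b0.
have [->|qn1] := eqVneq q 1; first by rewrite powRr1 // invr1 mulr1 subrr addr0.
have q1' : 1 < q by rewrite lt_neqAle eq_sym qn1 q1.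
pose p := q / (q - 1).
have p0 : 0 < p by rewrite /p divr_gt0 //; lra.
have hpq : q^-1 + p^-1 = 1 by rewrite /p invf_div; field; lra.
have := conjugate_powR b0 ler01 (lt_trans ltr01 q1') p0 hpq.
rewrite mulr1 powR1 => h; apply: (le_trans h); rewrite lerD2l.
by move: hpq; rewrite ?div1r ?mul1r; lra.
Qed.

Lemma power_mean {I : finType} {P : pred I} (a : I -> R) {q : R} :
  1 <= q -> (0 < #|P|)%N -> (forall i, 0 <= a i) ->
  \sum_(i in P) a i <= #|P|%:R * ((#|P|%:R)^-1 * \sum_(i in P) a i `^ q) `^ q^-1.
Proof.
move=> q1 NP a0.
set N : R := #|P|%:R.
have N0 : 0 < N by rewrite ltr0n.
set E := N^-1 * _.
set B := E `^ q^-1.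
have [Bz|Bnz] := eqVneq B 0.
  have Sz : \sum_(i in P) a i `^ q = 0.
    move: (powR_eq0_eq0 Bz); rewrite /E => /eqP.
    by rewrite mulf_eq0 invr_eq0 gt_eqF //= => /eqP.
  rewrite big1 ?mulr_ge0 ?powR_ge0 ?ler0n // => i Pi.
  apply: (@powR_eq0_eq0 _ _ q).
  by apply: (psumr_eq0P _ Sz) => // j _; exact: powR_ge0.
have Bp : 0 < B by rewrite lt_neqAle eq_sym Bnz powR_ge0.
have E0 : 0 <= E.
  apply: mulr_ge0; first by rewrite invr_ge0 ltW.
  by apply: sumr_ge0 => i _; exact: powR_ge0.
have BqE : B `^ q = E.
  by rewrite /B -powRrM mulVf ?powRr1 // gt_eqF //; apply: lt_le_trans q1.
pose b i := a i / B.
have ab i : a i = b i * B by rewrite /b divfK ?gt_eqF.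
have b0 i : 0 <= b i by exact: divr_ge0 (a0 i) (ltW Bp).
have sb : \sum_(i in P) b i `^ q = N.
  have : N * E = E * \sum_(i in P) b i `^ q.
    rewrite /E mulrA mulfV ?gt_eqF // mul1r mulr_sumr.
    by apply: eq_bigr => i _; rewrite ab powRM ?BqE 1?mulrC //; exact: ltW.
  have Ep : 0 < E by rewrite -BqE powR_gt0.
  by move=> e; apply: (@mulfI _ E); rewrite ?gt_eqF // -e mulrC.
have hb : \sum_(i in P) b i <= N.
  apply: (le_trans (y := \sum_(i in P) (b i `^ q / q + (1 - q^-1)))).
    by apply: ler_sum => i _; exact: young_tangent.
  rewrite big_split /= -mulr_suml sb sumr_const -mulr_natr -/N.
  by rewrite le_eqVlt; apply/orP; left; apply/eqP; field; rewrite gt_eqF //; lra.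
rewrite (eq_bigr (fun i => b i * B)) => [|i _]; last by rewrite ab.
by rewrite -mulr_suml ler_wpM2r // ltW.
Qed.

End ConvexityInequalities.
Section GridWeights.
Context {R : realType}.
Variables (d : nat) (dl : R).
Hypothesis dl_gt0 : 0 < dl.
Local Notation K := (Num.truncn dl^-1).
Local Notation G := (gidx R d dl).
Implicit Types (y p : 'rV[R]_d) (v g : G) (l : R).

(* Multilinear interpolation weight of the grid node v at the point y. *)
Definition tent_weight y v : R := \prod_i tent (y ord0 i / dl - (v i : nat)%:R).

(* Share of the cell of the node g in the box of side l * dl centred at p. *)
Definition cell_weight l p g : R := \prod_i cell_share l (p ord0 i / dl) (g i).

Lemma tent_weight_ge0 y v : 0 <= tent_weight y v.
Proof. by apply: prodr_ge0 => i _; exact: tent_ge0. Qed.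

Lemma cell_weight_ge0 l p g : 0 < l -> 0 <= cell_weight l p g.
Proof. by move=> l0; apply: prodr_ge0 => i _; exact: cell_share_ge0. Qed.

Definition grid_range y : Prop := forall i, 0 <= y ord0 i / dl <= K%:R.

Lemma tent_weight_sum1 y : grid_range y -> \sum_(v : G) tent_weight y v = 1.
Proof.
move=> hy; rewrite /tent_weight.
rewrite -(bigA_distr_bigA (fun i (k : 'I_K.+1) => tent (y ord0 i / dl - (k : nat)%:R))).
by rewrite big1 // => i _; apply: tent_sum1.
Qed.

Lemma tent_weight_bary y : grid_range y -> \sum_(v : G) tent_weight y v *: gpt R d dl v = y.
Proof.
move=> hy; apply/rowP => i; rewrite summxE.
pose F j (k : 'I_K.+1) :=
  tent (y ord0 j / dl - (k : nat)%:R) * (if j == i then (k : nat)%:R * dl else 1).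
have -> : \sum_(v : G) (tent_weight y v *: gpt R d dl v) ord0 i = \sum_(v : G) \prod_j F j (v j).
  apply: eq_bigr => v _; rewrite !mxE /F big_split /= /tent_weight; congr (_ * _).
  rewrite (bigD1 i) //= eqxx.
  by rewrite (big1 _ _ (fun j => if j == i then (v j : nat)%:R * dl else 1)) ?mulr1 //
    => j /negbTE ->.
rewrite -(bigA_distr_bigA F) (bigD1 i) //= [X in _ * X]big1 ?mulr1; last first.
  move=> j /negbTE ji; rewrite /F; under eq_bigr => k _ do rewrite ji mulr1.
  exact: tent_sum1.
rewrite /F; under eq_bigr => k _ do rewrite eqxx mulrA.
by rewrite -mulr_suml tent_bary // divfK // gt_eqF.
Qed.

Lemma rescaled_close (r : R) (k : nat) : -1 < r / dl - k%:R < 1 -> `|r - k%:R * dl| < dl.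
Proof.
rewrite -ltr_norml => h.
have -> : r - k%:R * dl = (r / dl - k%:R) * dl by rewrite mulrBl divfK // gt_eqF.
by rewrite normrM (gtr0_norm dl_gt0) -[X in _ < X]mul1r ltr_pM2r.
Qed.

Lemma tent_weight_neq0 y v : tent_weight y v != 0 ->
  forall i, `|y ord0 i - (v i : nat)%:R * dl| < dl.
Proof. by move=> /prodf_neq0 h i; apply/rescaled_close/tent_neq0/h. Qed.

Lemma cell_weight_neq0 l p g : 0 < l <= 1 -> cell_weight l p g != 0 ->
  forall i, `|p ord0 i - (g i : nat)%:R * dl| < dl.
Proof. by move=> hl /prodf_neq0 h i; apply: rescaled_close; exact: cell_share_neq0 hl (h i isT). Qed.

Lemma tent_weight_load (yv : G -> 'rV[R]_d) (b : 'I_d -> R) mu v : 1 <= mu ->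
  (forall g i, yv g ord0 i / dl = b i + mu * (g i : nat)%:R) ->
  \sum_(g : G) tent_weight (yv g) v <= 1.
Proof.
move=> mu1 hy.
have -> : \sum_(g : G) tent_weight (yv g) v =
    \prod_i \sum_(k : 'I_K.+1) tent ((b i - (v i : nat)%:R) + mu * (k : nat)%:R).
  rewrite (bigA_distr_bigA
    (fun i (k : 'I_K.+1) => tent ((b i - (v i : nat)%:R) + mu * (k : nat)%:R))).
  by apply: eq_bigr => g _; apply: eq_bigr => i _; rewrite hy; congr tent; lra.
apply: (le_trans (y := \prod_(i < d) (1 : R))); last by rewrite big1.
apply: ler_prod => i _; rewrite sumr_ge0 => [|k _]; last exact: tent_ge0.
exact: tent_load.
Qed.

Lemma cell_weight_sum1 l p : 0 < l ->
  (forall i, 0 <= p ord0 i / dl - l / 2 + 1 / 2 /\ p ord0 i / dl + l / 2 + 1 / 2 <= K.+1%:R) ->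
  \sum_(g : G) cell_weight l p g = 1.
Proof.
move=> l0 hp; rewrite /cell_weight.
rewrite -(bigA_distr_bigA (fun i (k : 'I_K.+1) => cell_share l (p ord0 i / dl) k)) /=.
by rewrite big1 // => i _; have [h1 h2] := hp i; exact: cell_share_sum1.
Qed.

(* Boxes centred along an affine progression of step l are disjoint, so a node
   receives total weight at most l^-d. *)
Lemma cell_weight_load l (pv : G -> 'rV[R]_d) (a : 'I_d -> R) g : 0 < l ->
  (forall h i, pv h ord0 i / dl = a i + l * (h i : nat)%:R) ->
  \sum_(h : G) cell_weight l (pv h) g <= l^-1 ^+ d.
Proof.
move=> l0 hp.
have -> : \sum_(h : G) cell_weight l (pv h) g =
    \prod_i \sum_(k : 'I_K.+1) cell_share l (a i + l * (k : nat)%:R) (g i).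
  rewrite (bigA_distr_bigA
    (fun i (k : 'I_K.+1) => cell_share l (a i + l * (k : nat)%:R) (g i))).
  by apply: eq_bigr => h _; apply: eq_bigr => i _; rewrite hp.
apply: (le_trans (y := \prod_(i < d) l^-1)); last by rewrite prodr_const card_ord.
apply: ler_prod => i _; rewrite sumr_ge0 => [|k _]; last exact: cell_share_ge0.
exact: cell_share_load.
Qed.

End GridWeights.
Section CubesInConvexSets.
Context {R : realType} {d : nat}.
Implicit Types (O : set 'rV[R]_d) (c p q w z : 'rV[R]_d).

Definition cube_nbhd w (a : R) : set 'rV[R]_d :=
  [set z | forall j, `|z ord0 j - w ord0 j| < a].

Lemma cube_nbhd_center {w} {a : R} : 0 < a -> cube_nbhd w a w.
Proof. by move=> a0 j; rewrite subrr normr0. Qed.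

Lemma cube_sub_eball c (r a : R) : (0 < d)%N -> 0 <= a -> 0 <= r ->
  d%:R * a ^+ 2 <= r ^+ 2 -> cube_nbhd c a `<=` eball R d c r.
Proof.
move=> d0 a0 r0 hr z hz; rewrite /eball /enorm /=.
have hs : \sum_(i < d) ((z - c) ord0 i) ^+ 2 < r ^+ 2.
  apply: (lt_le_trans (y := \sum_(i < d) a ^+ 2)); last first.
    by rewrite sumr_const card_ord -mulr_natl.
  apply: ltr_sum; first by apply/hasP; exists (Ordinal d0); rewrite ?mem_index_enum.
  by move=> i _; rewrite !mxE; have := hz i; rewrite ltr_norml => /andP[h1 h2]; nra.
have s0 : 0 <= \sum_(i < d) ((z - c) ord0 i) ^+ 2 by apply: sumr_ge0 => i _; exact: sqr_ge0.
by rewrite -(ger0_norm r0) -sqrtr_sqr ltr_sqrt //; lra.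
Qed.

Lemma cube_hull O p w (a mu : R) : Defs.convex_set R d O -> O p ->
  cube_nbhd w a `<=` O -> 0 < mu <= 1 -> cube_nbhd (p + mu *: (w - p)) (mu * a) `<=` O.
Proof.
move=> cO Op hw /andP[mu0 mu1] z hz.
set w' := w + mu^-1 *: (z - (p + mu *: (w - p))).
have Ow' : O w'.
  apply: hw => j; rewrite /w' !mxE addrAC subrr add0r normrM gtr0_norm ?invr_gt0 //.
  by rewrite -(ltr_pM2l mu0) mulrA mulfV ?gt_eqF // mul1r; have := hz j; rewrite !mxE.
have -> : z = mu *: w' + (1 - mu) *: p.
  by apply/rowP => i; rewrite /w' !mxE; field; rewrite gt_eqF.
by apply: cO => //; apply/andP; split; lra.
Qed.

Lemma cube_margin {O q p} {a b e : R} : O `<=` unit_cube R d -> cube_nbhd q a `<=` O ->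
  (forall j, `|p ord0 j - q ord0 j| < b) -> b + e <= a -> 0 <= e ->
  forall i, e <= p ord0 i <= 1 - e.
Proof.
move=> Oc hq hp hab e0 i.
have shifted (s : R) : `|s| = e -> O (p + \row_j (if j == i then s else 0)).
  move=> hs; apply: hq => j; rewrite !mxE.
  case: eqP => _; last by rewrite addr0 (lt_le_trans (hp j)) //; lra.
  rewrite addrAC; apply: (le_lt_trans (ler_normD _ _)); rewrite hs.
  by apply: (lt_le_trans (y := b + e)); [rewrite ltrD2r | ].
have /Oc/(_ i) := shifted e (ger0_norm e0).
have /Oc/(_ i) := shifted (- e) ltac:(by rewrite normrN ger0_norm).
by rewrite !mxE eqxx => /andP[h1 _] /andP[_ h2]; apply/andP; split; lra.
Qed.

Lemma grid_point_near {delta : R} {p} : 0 < delta -> unit_cube R d p ->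
  exists k : gidx R d delta, cube_nbhd p delta (gpt R d delta k).
Proof.
move=> dl0 hp.
exists [ffun i => inord (Num.truncn (p ord0 i / delta))] => i.
have /andP[p0 p1] := hp i.
have pi0 : 0 <= p ord0 i / delta by rewrite divr_ge0 // ltW.
have tle : (Num.truncn (p ord0 i / delta) < (Num.truncn delta^-1).+1)%N.
  rewrite ltnS; apply: le_truncn; rewrite -[X in _ <= X]mul1r.
  by apply: ler_wpM2r => //; rewrite invr_ge0 ltW.
rewrite !mxE ffunE inordK //.
have /andP[t1 t2] := truncn_itv pi0.
set n := Num.truncn _ in t1 t2 tle *.
have e1 : n%:R * delta <= p ord0 i by rewrite -ler_pdivlMr.
have e2 : p ord0 i < n%:R * delta + delta.
  by move: t2; rewrite ltr_pdivrMr // -natr1 mulrDl mul1r.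
by rewrite distrC ger0_norm; lra.
Qed.

End CubesInConvexSets.
Section ParameterChoice.
Context {R : realType}.

Lemma powR_three_halves (n : nat) : (0 < n)%N -> n%:R `^ (3 / 2) = n%:R * Num.sqrt n%:R :> R.
Proof.
move=> n0; have -> : (3 / 2 : R) = 1 + 2^-1 by field.
rewrite powRD; last by apply/implyP => _; rewrite pnatr_eq0 -lt0n.
by rewrite powRr1 ?powR12_sqrt.
Qed.

Lemma cube_sub_fat_ball {d} {c : 'rV[R]_d} {r delta : R} : (0 < d)%N -> 0 < delta ->
  10 * (d%:R `^ (3 / 2)) * delta <= r -> cube_nbhd c (10 * d%:R * delta) `<=` eball R d c r.
Proof.
move=> d0 dl0; rewrite powR_three_halves // => hr.
set u := Num.sqrt d%:R in hr.
have dd1 : 1 <= d%:R :> R by rewrite ler1n.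
have uu : u ^+ 2 = d%:R by rewrite sqr_sqrtr //; lra.
have h0 : 0 <= 10 * (d%:R * u) * delta by rewrite !mulr_ge0 ?sqrtr_ge0 //; lra.
apply: cube_sub_eball => //; first by rewrite !mulr_ge0 //; lra.
  exact: le_trans h0 hr.
have := lerXn2r 2 (h0 : _ \in Num.nneg) (le_trans h0 hr : _ \in Num.nneg) hr.
by rewrite !exprMn uu; nra.
Qed.

Lemma bernoulli_ge n (a : R) : 0 <= a <= 1 -> 1 - n%:R * a <= (1 - a) ^+ n.
Proof.
move=> /andP[a0 a1]; elim: n => [|n IH]; first by rewrite mul0r subr0 expr0.
rewrite exprSr -natr1.
apply: (le_trans (y := (1 - n%:R * a) * (1 - a))); last by apply: ler_wpM2r => //; lra.
have : 0 <= n%:R * a * a by rewrite !mulr_ge0.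
by rewrite mulrDl mul1r; nra.
Qed.

Lemma shrink_ratio_bound {d : nat} {eps : R} : 0 <= eps -> d%:R * eps = 1 / 2 ->
  ((1 - eps) * (1 - 3 / 5 * eps))^-1 ^+ d <= 5.
Proof.
move=> eps0 deps.
have eps2 : eps <= 1 / 2.
  case: d deps => [|n] deps; first by move: deps; rewrite mulr0n mul0r; lra.
  have : 1 <= n.+1%:R :> R by rewrite ler1n.
  nra.
set lam := (1 - eps) * (1 - 3 / 5 * eps).
have lam_ge : 1 - 8 / 5 * eps <= lam by rewrite /lam; nra.
have low_ge0 : 0 <= 1 - 8 / 5 * eps by lra.
have bern := bernoulli_ge d (8 / 5 * eps) ltac:(apply/andP; split; lra).
have mono := lerXn2r d (low_ge0 : _ \in Num.nneg) (le_trans low_ge0 lam_ge : _ \in Num.nneg) lam_ge.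
have lam_pow : 1 / 5 <= lam ^+ d.
  by move: bern; rewrite mulrCA deps; lra.
have pos : 0 < lam ^+ d by apply: lt_le_trans lam_pow; lra.
by rewrite exprVn -(ler_pM2r pos) mulVf ?gt_eqF //; lra.
Qed.

End ParameterChoice.
Lemma sum_le_on_support {R : realType} (I : finType) (P : pred I) (F a : I -> R) (C : R) :
  (forall i, ~~ P i -> F i = 0) -> (forall i, P i -> F i <= C * a i) ->
  \sum_i F i <= C * \sum_(i in P) a i.
Proof.
move=> F0 Fle; rewrite (bigID P) /= [X in _ + X]big1 ?addr0 => [|i /F0] //.
by rewrite mulr_sumr; apply: ler_sum.
Qed.

Section LowerBoundArgument.
Context {R : realType}.
Context {d : nat} {delta : R} {O : set 'rV[R]_d} {f : 'rV[R]_d -> R}.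
Context {c x : 'rV[R]_d} {rho s eta : R}.
Hypothesis delta_gt0 : 0 < delta.
Hypothesis O_convex : Defs.convex_set R d O.
Hypothesis f_convex : convex_on R d O f.
Hypothesis O_unit : O `<=` unit_cube R d.
Hypothesis Ox : O x.
Hypothesis cube_c : cube_nbhd c rho `<=` O.
Hypothesis eta_rho : eta * rho = 3 * delta.
Hypotheses (s_ge : 1 / 2 <= s) (s_lt1 : s < 1) (eta_gt0 : 0 < eta) (eta_lt1 : eta < 1).

Local Notation G := (gidx R d delta).
Local Notation gp := (gpt R d delta).
Local Notation K := (Num.truncn delta^-1).
Local Notation OS := (in_OS R d delta O).

(* lra does not consult section hypotheses; push the parameter bounds into the goal. *)
Local Ltac params :=
  have := delta_gt0; have := s_ge; have := s_lt1; have := eta_gt0; have := eta_lt1.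

(* The grid point h pulled towards c, then towards x: a copy of O ∩ S shrunk by
   the ratio lam, which stays well inside O. *)
Definition contract (h : G) : 'rV[R]_d := gp h + eta *: (c - gp h).
Definition transport (h : G) : 'rV[R]_d := x + s *: (contract h - x).
Definition lam : R := s * (1 - eta).

(* The point whose convex combination with x (weights s, 1 - s) is the grid point g. *)
Definition expand (g : G) : 'rV[R]_d := x + s^-1 *: (gp g - x).

Definition grid_defect (g : G) : R :=
  `|f (gp g)| + s * \sum_(v : G) tent_weight d delta (expand g) v * `|f (gp v)|.

Lemma s_gt0 : 0 < s. Proof. by params; lra. Qed.

Lemma lam_itv : 0 < lam <= 1.
Proof.
have s0 := s_gt0; have e0 : 0 < 1 - eta by params; lra.
by rewrite /lam mulr_gt0 //= -[1]mulr1 ler_pM ?ltW //; params; lra.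
Qed.

Lemma cube_contract h : O (gp h) -> cube_nbhd (contract h) (3 * delta) `<=` O.
Proof. by move=> Oh; rewrite -eta_rho; apply: cube_hull => //; params; lra. Qed.

Lemma cube_transport h : O (gp h) -> cube_nbhd (transport h) (s * (3 * delta)) `<=` O.
Proof. by move=> Oh; apply: cube_hull => //; [exact: cube_contract | params; lra]. Qed.

(* Transported points are delta away from the boundary of the unit cube, so
   their boxes split completely among grid nodes. *)
Lemma transport_weight_sum1 h : O (gp h) ->
  \sum_(g : G) cell_weight d delta lam (transport h) g = 1.
Proof.
move=> Oh; have /andP[lam0 lam1] := lam_itv.
apply: cell_weight_sum1 => // i.
have margin := cube_margin (p := transport h) (b := s * (3 * delta) - delta) (e := delta)
  O_unit (cube_transport h Oh).
have /andP[m1 m2] := margin ltac:(by move=> j; rewrite subrr normr0; have := s_ge; have := delta_gt0; nra)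
  ltac:(by params; lra) (ltW delta_gt0) i.
have hK : delta^-1 < K.+1%:R by exact: truncnS_gt.
have u1 : 1 <= transport h ord0 i / delta by rewrite ler_pdivlMr // mul1r.
have u2 : transport h ord0 i / delta <= delta^-1 - 1.
  by rewrite ler_pdivrMr // mulrBl mul1r mulVf ?gt_eqF //; params; lra.
by split; params; lra.
Qed.

Section LinkedPair.
Variables (h g : G).
Hypothesis Oh : O (gp h).
Hypothesis linked : cell_weight d delta lam (transport h) g != 0.

Lemma grid_near_transport j : `|gp g ord0 j - transport h ord0 j| < delta.
Proof. by rewrite distrC [gp _ _ _]mxE; exact: cell_weight_neq0 lam_itv linked j. Qed.

Lemma linked_grid_in_O : O (gp g).
Proof.
by apply: (cube_transport h Oh) => j; apply: lt_le_trans (grid_near_transport j) _; have := s_ge; have := delta_gt0; nra.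
Qed.

Lemma expand_near_contract j : `|expand g ord0 j - contract h ord0 j| < 2 * delta.
Proof.
have -> : expand g ord0 j - contract h ord0 j = s^-1 * (gp g ord0 j - transport h ord0 j).
  by rewrite /expand /transport !mxE; field; rewrite gt_eqF // s_gt0.
rewrite normrM gtr0_norm ?invr_gt0 ?s_gt0 // mulrC ltr_pdivrMr ?s_gt0 //.
by apply: lt_le_trans (grid_near_transport j) _; have := s_ge; have := delta_gt0; nra.
Qed.

Lemma cube_expand : cube_nbhd (expand g) delta `<=` O.
Proof.
move=> z hz; apply: (cube_contract h Oh) => j.
rewrite -[_ - _](subrKA (expand g ord0 j)).
apply: le_lt_trans (ler_normD _ _) _.
by have := hz j; have := expand_near_contract j; params; lra.
Qed.

Lemma expand_grid_range : grid_range d delta (expand g).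
Proof.
move=> i; have /andP[m1 m2] := cube_margin (e := delta) O_unit (cube_contract h Oh)
  expand_near_contract ltac:(by params; lra) (ltW delta_gt0) i.
have hK : 1 < K.+1%:R * delta by rewrite -ltr_pdivrMr // div1r; exact: truncnS_gt.
apply/andP; split; first by rewrite divr_ge0 // ltW // (lt_le_trans delta_gt0).
by rewrite ler_pdivrMr //; move: hK; rewrite -natr1 mulrDl mul1r; lra.
Qed.

Lemma tent_support_in_O v : tent_weight d delta (expand g) v != 0 -> O (gp v).
Proof.
move=> hv; apply: cube_expand => j; rewrite distrC [gp _ _ _]mxE.
exact: tent_weight_neq0 hv j.
Qed.

(* Convexity on [x, expand g] and Jensen for the interpolation of expand g:
   (1 - s) (-f x) <= -f(g) + s f(expand g) <= grid_defect g. *)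
Lemma defect_bound : (1 - s) * - f x <= grid_defect g.
Proof.
have [_ jensen] := jensen_seq (index_enum G) O_convex f_convex
  (tent_weight_ge0 _ _ (expand g)) (tent_weight_sum1 _ _ _ expand_grid_range) tent_support_in_O.
rewrite tent_weight_bary // in jensen; last exact: expand_grid_range.
have conv : f (gp g) <= s * f (expand g) + (1 - s) * f x.
  have -> : gp g = s *: expand g + (1 - s) *: x.
    by apply/rowP => i; rewrite /expand !mxE; field; rewrite gt_eqF // s_gt0.
  apply: f_convex => //; last by apply/andP; split; params; lra.
  by apply: cube_expand; apply: cube_nbhd_center.
have habs : \sum_(v : G) tent_weight d delta (expand g) v * f (gp v) <=
            \sum_(v : G) tent_weight d delta (expand g) v * `|f (gp v)|.
  by apply: ler_sum => v _; rewrite ler_wpM2l ?tent_weight_ge0 ?ler_norm.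
have hn : - f (gp g) <= `|f (gp g)| by rewrite -normrN ler_norm.
have := ler_wpM2l (ltW s_gt0) (le_trans jensen habs).
by rewrite /grid_defect; params; lra.
Qed.

End LinkedPair.

Definition column_weight (g : G) : R :=
  \sum_(h in OS) cell_weight d delta lam (transport h) g.

Lemma column_weight_support g : ~~ OS g -> column_weight g = 0.
Proof.
move=> hg; apply: big1 => h /asboolP Oh; apply/eqP; apply: contraNT hg => hw.
by apply/asboolP; exact: linked_grid_in_O _ _ Oh hw.
Qed.

Lemma column_weight_le g : column_weight g <= lam^-1 ^+ d.
Proof.
have /andP[lam0 _] := lam_itv.
pose a i := (x ord0 i + s * (eta * c ord0 i - x ord0 i)) / delta.
have coord h i : transport h ord0 i / delta = a i + lam * (h i : nat)%:R.
  by rewrite /transport /contract /lam /a !mxE; field; rewrite gt_eqF.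
apply: le_trans (cell_weight_load _ _ _ _ _ g lam0 coord).
rewrite [X in _ <= X](bigID OS) /= lerDl.
by apply: sumr_ge0 => h _; exact: cell_weight_ge0.
Qed.

Lemma expand_column_load v : \sum_(g : G) tent_weight d delta (expand g) v <= 1.
Proof.
pose b i := (x ord0 i - s^-1 * x ord0 i) / delta.
have coord g i : expand g ord0 i / delta = b i + s^-1 * (g i : nat)%:R.
  by rewrite /expand /b !mxE; field; rewrite ?(gt_eqF s_gt0) ?(gt_eqF delta_gt0).
apply: (tent_weight_load _ _ _ _ _ v _ coord).
by rewrite invf_ge1 ?s_gt0 //; params; lra.
Qed.

(* Averaging defect_bound against the transport weights and exchanging sums:
   #(O ∩ S) (1 - s) (-f x) <= (1 + s) lam^-d \sum_(k in O ∩ S) |f(k)|. *)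
Lemma averaged_bound :
  #|OS|%:R * ((1 - s) * - f x) <= (1 + s) * lam^-1 ^+ d * \sum_(k in OS) `|f (gp k)|.
Proof.
set L := lam^-1 ^+ d; set S := \sum_(k in OS) _.
have /andP[lam0 _] := lam_itv.
have L0 : 0 <= L by rewrite exprn_ge0 // invr_ge0 ltW.
have averaged : #|OS|%:R * ((1 - s) * - f x) <= \sum_(g : G) column_weight g * grid_defect g.
  under eq_bigr do rewrite /column_weight mulr_suml.
  rewrite exchange_big /= -sum1_card natr_sum mulr_suml.
  apply: ler_sum => h /asboolP Oh.
  apply: (le_trans (y := \sum_(g : G) cell_weight d delta lam (transport h) g *
                         ((1 - s) * - f x))).
    by rewrite -mulr_suml transport_weight_sum1 // mul1r.
  apply: ler_sum => g _.
  have [->|hw] := eqVneq (cell_weight d delta lam (transport h) g) 0; first by rewrite !mul0r.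
  by rewrite ler_wpM2l ?cell_weight_ge0 //; exact: defect_bound _ _ Oh hw.
have direct : \sum_(g : G) column_weight g * `|f (gp g)| <= L * S.
  apply: sum_le_on_support => g; first by move/column_weight_support ->; rewrite mul0r.
  by move=> _; rewrite ler_wpM2r ?column_weight_le.
have interpolated : \sum_(v : G) (\sum_(g : G) column_weight g *
    tent_weight d delta (expand g) v) * `|f (gp v)| <= L * S.
  apply: sum_le_on_support => v.
    move=> hv; rewrite big1 ?mul0r // => g _; rewrite /column_weight mulr_suml.
    apply: big1 => h /asboolP Oh.
    have [->|hw] := eqVneq (cell_weight d delta lam (transport h) g) 0; first by rewrite mul0r.
    have [->|ht] := eqVneq (tent_weight d delta (expand g) v) 0; first by rewrite mulr0.
    by move: hv; rewrite /in_OS asboolT //; exact: tent_support_in_O _ _ Oh hw _ ht.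
  move=> _; rewrite ler_wpM2r //.
  apply: (le_trans (y := L * \sum_(g : G) tent_weight d delta (expand g) v)).
    rewrite mulr_sumr; apply: ler_sum => g _.
    by rewrite ler_wpM2r ?tent_weight_ge0 ?column_weight_le.
  by rewrite -[X in _ <= X]mulr1 ler_wpM2l ?expand_column_load.
have split_defect : \sum_(g : G) column_weight g * grid_defect g =
    \sum_(g : G) column_weight g * `|f (gp g)| + s * \sum_(v : G)
      (\sum_(g : G) column_weight g * tent_weight d delta (expand g) v) * `|f (gp v)|.
  rewrite /grid_defect; under eq_bigr do rewrite mulrDr mulrCA mulr_sumr.
  rewrite big_split /= -mulr_sumr exchange_big /=; congr (_ + s * _).
  by apply: eq_bigr => v _; rewrite mulr_suml; apply: eq_bigr => g _; rewrite mulrA.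
have := ler_wpM2l (ltW s_gt0) interpolated.
by move: averaged direct; rewrite split_defect; lra.
Qed.

End LowerBoundArgument.
Section FinalSteps.
Context {R : realType} {d : nat} {delta : R}.
Local Notation gp := (gpt R d delta).

Lemma grid_nonempty {O : set 'rV[R]_d} {c : 'rV[R]_d} {rho : R} : 0 < delta -> delta <= rho ->
  O `<=` unit_cube R d -> cube_nbhd c rho `<=` O -> (0 < #|in_OS R d delta O|)%N.
Proof.
move=> dl0 dl_rho O_unit cube_c.
have [k hk] := grid_point_near dl0 (O_unit c (cube_c c (cube_nbhd_center (lt_le_trans dl0 dl_rho)))).
apply/card_gt0P; exists k; apply/asboolP/cube_c => j.
exact: lt_le_trans (hk j) dl_rho.
Qed.

Lemma sum_abs_le_card {O : set 'rV[R]_d} {f : 'rV[R]_d -> R} {q t : R} :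
  1 <= q -> (0 < #|in_OS R d delta O|)%N -> ellS R d delta f O q <= t ->
  \sum_(k in in_OS R d delta O) `|f (gp k)| <= #|in_OS R d delta O|%:R * t.
Proof.
move=> q1 N0 ell.
apply: le_trans (power_mean (fun k => `|f (gp k)|) q1 N0 (fun k => normr_ge0 _)) _.
by rewrite ler_wpM2l.
Qed.

End FinalSteps.

Lemma rearrange_bound {R : realType} {d : nat} {N eps M L S t : R} :
  0 < N -> 0 <= t -> d%:R * eps = 1 / 2 -> eps <= 1 / 2 -> 0 <= L <= 5 -> 0 <= S <= N * t ->
  N * ((1 - (1 - eps)) * M) <= (1 + (1 - eps)) * L * S -> M <= 20 * d%:R * t.
Proof.
move=> N0 t0 deps eps2 /andP[L0 L5] /andP[S0 SN] hav.
have two_eps : 0 <= 2 - eps by lra.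
have bound : eps * M <= (2 - eps) * 5 * t.
  rewrite -(ler_pM2l N0).
  have -> : N * ((2 - eps) * 5 * t) = (2 - eps) * (5 * (N * t)) by ring.
  apply: le_trans (ler_wpM2l two_eps (ler_pM L0 S0 L5 SN)).
  have e1 : 1 - (1 - eps) = eps by ring.
  have e2 : 1 + (1 - eps) = 2 - eps by ring.
  by rewrite e1 e2 -mulrA in hav.
have two_d : 0 <= 2 * d%:R :> R by rewrite mulr_ge0 ?ler0n.
have := ler_wpM2l two_d bound.
have -> : 2 * d%:R * (eps * M) = M by rewrite mulrA -(mulrA 2) deps; field.
have -> : 2 * d%:R * ((2 - eps) * 5 * t) = 20 * d%:R * t - 5 * t * (2 * (d%:R * eps)).
  by ring.
by rewrite deps; lra.
Qed.
Theorem lemma9p4 (R : realType) (d : nat) (delta q : R) (O : set 'rV[R]_d) :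
  (0 < d)%N -> 0 < delta -> 1 <= q ->
  convex_body R d O -> O `<=` unit_cube R d ->
  (exists (c : 'rV[R]_d) (r : R),
      10 * (d%:R `^ (3 / 2)) * delta <= r /\ eball R d c r `<=` O) ->
  forall (t : R), 0 < t ->
  forall f, BqS R d delta q t O f ->
  forall x, O x -> - (20 * d%:R * t) <= f x.
Proof.
move=> d0 dl0 q1 [cO _] O_unit [c [r [hr hball]]] t t0 f [f_convex ell] x Ox.
have dd1 : 1 <= d%:R :> R by rewrite ler1n.
set eps : R := (2 * d%:R)^-1.
have deps : d%:R * eps = 1 / 2 by rewrite /eps; field; lra.
have eps0 : 0 < eps by rewrite invr_gt0; lra.
have eps2 : eps <= 1 / 2 by nra.
set rho := 10 * d%:R * delta.
have cube_c : cube_nbhd c rho `<=` O := subset_trans (cube_sub_fat_ball d0 dl0 hr) hball.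
have eta_rho : 3 / 5 * eps * rho = 3 * delta.
  have -> : 3 / 5 * eps * rho = 6 * (d%:R * eps) * delta by rewrite /rho; field.
  by rewrite deps; lra.
have dl_rho : delta <= rho by rewrite /rho; nra.
have N0 := grid_nonempty dl0 dl_rho O_unit cube_c.
have hav := averaged_bound (s := 1 - eps) dl0 cO f_convex O_unit Ox cube_c eta_rho
  ltac:(lra) ltac:(lra) ltac:(lra) ltac:(lra).
rewrite /lam in hav; rewrite lerNl; apply: (rearrange_bound _ (ltW t0) deps eps2 _ _ hav).
- by rewrite ltr0n.
- apply/andP; split; last exact: shrink_ratio_bound (ltW eps0) deps.
  by apply/exprn_ge0; rewrite invr_ge0 mulr_ge0 //; lra.
- by apply/andP; split; [exact: sumr_ge0 | exact: sum_abs_le_card q1 N0 ell].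
Qed.
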